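(* Let $m,n\ge0$. The element $t$ is invertible in the ring $U^{\pm}_{m,n}$.
   Context: $U^{\pm}_{m,n}$ is the commutative ring generated over $\mathbb Z$ by $u_1,u_2,\dots$, $v_1,v_2,\dots$ and $t$, with conventions $u_0=v_0=1$ and $u_i=v_i=0$ for $i<0$, subject to the relations $R_I(w)=0$ for all $I=(i_1,\dots,i_{m+1})\in\mathbb Z^{m+1}$, where $w_i=u_i-tv_{-i-m+n}$ ($i\in\mathbb Z$) and $R_I(w)=\det(w_{i_\alpha+\beta-1})_{1\le\alpha,\beta\le m+1}$. *)

From HB Require Import structures.
From mathcomp Require Import all_boot all_order all_algebra.
Set Implicit Arguments. Unset Strict Implicit. Unset Printing Implicit Defensive.
Import Order.TTheory GRing.Theory Num.Theory.
Local Open Scope ring_scope.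

(* The ring U^{\pm}_{m,n} is presented by generators u_1,u_2,..., v_1,v_2,...,
   t and relations R_I(w) = 0.  We encode statements about it through its
   universal property: a "model" is a commutative ring A together with
   elements u, v : nat -> A (the value at index 0 is ignored and replaced by
   the convention u_0 = v_0 = 1) and t : A satisfying all relations. *)

Definition ext (A : pzRingType) (x : nat -> A) (i : int) : A :=
  match i with
  | Posz 0 => 1
  | Posz k => x k
  | Negz _ => 0
  end.

Definition wseq (A : pzRingType) (m n : nat) (u v : nat -> A) (t : A)
    (i : int) : A :=
  ext u i - t * ext v (- i - m%:Z + n%:Z).

(* R_I(w) = det (w_{i_alpha + beta - 1})_{1 <= alpha, beta <= m+1};
   with 0-based indices a, b : 'I_(m+1) the entry is w_{I a + b}. *)
Definition Rrel (A : comPzRingType) (m n : nat) (u v : nat -> A) (t : A)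
    (I : 'I_m.+1 -> int) : A :=
  \det (\matrix_(a < m.+1, b < m.+1) @wseq A m n u v t (I a + (b : nat)%:Z)).

Definition Upm_model (A : comPzRingType) (m n : nat) (u v : nat -> A) (t : A)
    : Prop :=
  forall I : 'I_m.+1 -> int, @Rrel A m n u v t I = 0.

From HB Require Import structures.
From mathcomp Require Import all_boot all_order all_algebra.
From mathcomp Require Import perm ring.
Set Implicit Arguments. Unset Strict Implicit. Unset Printing Implicit Defensive.
Import GRing.Theory Num.Theory.
Local Open Scope ring_scope.

(* Specialise the relations to I = (0, -1, ..., -m): the matrix (w_{b-a})_{a,b}
   has entries w_0 = 1 - t v_{n-m} on the diagonal and entries w_i with i < 0,
   i.e. multiples of t, below it.  Hence its determinant, which vanishes, is
   congruent to 1 modulo t, so t divides 1. *)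

Lemma perm_neq1_exists_lt (N : nat) (s : 'S_N) :
  s != 1%g -> exists i : 'I_N, (s i < i)%N.
Proof.
move=> s_neq1; apply/existsP; apply: contraR s_neq1 => /existsPn no_descent.
have le_s (j : 'I_N) : (j <= s j)%N by rewrite leqNgt no_descent.
have sum_s : (\sum_(j : 'I_N) s j = \sum_(j : 'I_N) j)%N.
  by rewrite [RHS](reindex_inj (@perm_inj _ s)).
have [_] := @leqif_sum _ xpredT (fun j : 'I_N => nat_of_ord j == s j) _ _
  (fun j _ => leqif_eq (le_s j)).
rewrite sum_s eqxx => /esym/forallP fix_s.
by apply/eqP/permP => i; rewrite perm1; apply/val_inj/esym/eqP/fix_s.
Qed.

Section Multiples.
Variables (A : comPzRingType) (t : A).

Definition multiple_of (x : A) := exists y, x = t * y.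

Lemma multiple_of0 : multiple_of 0.
Proof. by exists 0; rewrite mulr0. Qed.

Lemma multiple_ofD x y : multiple_of x -> multiple_of y -> multiple_of (x + y).
Proof. by move=> [a ->] [b ->]; exists (a + b); rewrite mulrDr. Qed.

Lemma multiple_ofMl x y : multiple_of y -> multiple_of (x * y).
Proof. by move=> [b ->]; exists (x * b); rewrite mulrCA. Qed.

Lemma multiple_ofMr x y : multiple_of x -> multiple_of (x * y).
Proof. by move=> [b ->]; exists (b * y); rewrite mulrA. Qed.

Lemma multiple_of_sum (I : finType) (P : pred I) (F : I -> A) :
  (forall i, P i -> multiple_of (F i)) -> multiple_of (\sum_(i | P i) F i).
Proof. by move=> FP; apply: big_ind => //; [exact: multiple_of0 | exact: multiple_ofD]. Qed.

Lemma multiple_of_prod_sub1 (I : finType) (F : I -> A) :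
  (forall i, multiple_of (F i - 1)) -> multiple_of (\prod_i F i - 1).
Proof.
move=> F1; apply: (big_rec (fun p => multiple_of (p - 1))) => [|i p _ [y Ep]].
  by rewrite subrr; exact: multiple_of0.
have [x Ex] := F1 i; exists (x * t * y + x + y).
by rewrite -[F i](subrK 1) -[p](subrK 1) Ex Ep; ring.
Qed.

Lemma multiple_of_det_sub1 (N : nat) (M : 'M[A]_N) :
  (forall i, multiple_of (M i i - 1)) ->
  (forall i j : 'I_N, (j < i)%N -> multiple_of (M i j)) ->
  multiple_of (\det M - 1).
Proof.
move=> diag_sub1 lower.
rewrite /determinant (bigD1 (1%g : 'S_N)) //= odd_perm1 expr0 mul1r addrAC.
apply: multiple_ofD.
  by apply: multiple_of_prod_sub1 => i; rewrite perm1.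
apply: multiple_of_sum => s s_neq1; apply: multiple_ofMl.
have [i lt_si] := perm_neq1_exists_lt s_neq1.
by rewrite (bigD1 i) //=; apply/multiple_ofMr/lower.
Qed.

Lemma unit_of_multiple_of_sub1 (x : A) :
  multiple_of (x - 1) -> x = 0 -> exists s, t * s = 1.
Proof. by move=> [y xy] x0; exists (- y); rewrite mulrN -xy x0 sub0r opprK. Qed.

End Multiples.

Section WSequence.
Variables (A : comPzRingType) (m n : nat) (u v : nat -> A) (t : A).

Lemma multiple_of_wseq0_sub1 : multiple_of t (wseq m n u v t 0 - 1).
Proof. by exists (- ext v (- 0 - m%:Z + n%:Z)); rewrite /wseq /=; ring. Qed.

Lemma multiple_of_wseq_lt0 (i : int) : i < 0 -> multiple_of t (wseq m n u v t i).
Proof.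
by case: i => // k _; exists (- ext v (- Negz k - m%:Z + n%:Z)); rewrite /wseq /=; ring.
Qed.

End WSequence.

Theorem mainTheorem15 (m n : nat) (A : comPzRingType) (u v : nat -> A) (t : A) :
  @Upm_model A m n u v t -> exists s : A, t * s = 1.
Proof.
move=> relations; pose I (a : 'I_m.+1) := - (a : nat)%:Z.
apply: (unit_of_multiple_of_sub1 _ (relations I)).
apply: multiple_of_det_sub1 => [i | i j lt_ji]; rewrite mxE /I.
  by rewrite addNr; exact: multiple_of_wseq0_sub1.
by apply: multiple_of_wseq_lt0; rewrite addrC subr_lt0 ltz_nat.
Qed.
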